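(* For $w\in\mathfrak S_n$, the following are equivalent: (1) $X^\circ_w\cap\mathrm{Pet}_n\neq\emptyset$; (2) $\Omega^\circ_w\cap\mathrm{Pet}_n\ne\emptyset$; (3) the permutation flag $w$ lies in $\mathrm{Pet}_n$, i.e. $w=w_J$ for some $J\subseteq[n-1]$.
   Context: $Fl_n=GL_n(\mathbb C)/B$ is the full flag variety of $\mathbb C^n$ ($B$ upper triangular), and a permutation $w$ is identified with the flag $V_i=\langle e_{w(1)},\dots,e_{w(i)}\rangle$. $X^\circ_w=BwB/B$ is the Schubert cell and $\Omega^\circ_w=B^-wB/B$ the dual Schubert cell ($B^-$ lower triangular). $N$ is the $n\times n$ nilpotent Jordan block ($Ne_1=0$, $Ne_i=e_{i-1}$), and $\mathrm{Pet}_n=\{V_\bullet: NV_i\subseteq V_{i+1},\ 1\le i\le n-1\}$. For $J\subseteq[n-1]$, $w_J$ is the longest element of the subgroup of $\mathfrak S_n$ generated by $\{s_i:i\in J\}$. (It is known that the permutation flags lying in $\mathrm{Pet}_n$ are exactly the $w_J$.) *)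

From mathcomp Require Import all_boot all_order all_algebra all_fingroup.
From mathcomp Require Import reals complex.
Set Implicit Arguments. Unset Strict Implicit. Unset Printing Implicit Defensive.
Import GRing.Theory Num.Theory.
Local Open Scope ring_scope.

Section Flags.
Variables (F : fieldType) (n : nat).

(* Vectors of F^n are column vectors; a subspace of F^n is encoded, in the
   mathcomp row-space convention, by a square matrix whose ROW space is the
   set of transposes v^T of the vectors v of the subspace. *)

(* V_i(g) = span of the first i columns g e_1, ..., g e_i of g. The flag
   associated to the coset gB is (V_i(g))_i. *)
Definition flagsp (g : 'M[F]_n) (i : nat) : 'M[F]_n :=
  \matrix_(k < n) if (k < i)%N then (col k g)^T else 0.

Definition jordanN : 'M[F]_n := \matrix_(i < n, j < n) (j == i.+1 :> nat)%:R.

(* Peterson variety condition: N V_i <= V_(i+1) for 1 <= i <= n-1.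
   (N v)^T = v^T N^T, so the image N V_i has row-space encoding V_i *m N^T. *)
Definition inPet (V : nat -> 'M[F]_n) : Prop :=
  forall i : nat, (1 <= i)%N -> (i <= n.-1)%N ->
    (V i *m jordanN^T <= V i.+1)%MS.

Definition pmat (w : 'S_n) : 'M[F]_n := \matrix_(i < n, j < n) (i == w j)%:R.

Definition upper_borel (b : 'M[F]_n) : Prop :=
  b \in unitmx /\ forall i j : 'I_n, (j < i)%N -> b i j = 0.
Definition lower_borel (b : 'M[F]_n) : Prop :=
  b \in unitmx /\ forall i j : 'I_n, (i < j)%N -> b i j = 0.

(* X°_w ∩ Pet ≠ ∅ : X°_w = B w B / B = { b w B : b ∈ B } *)
Definition schubert_meets_Pet (w : 'S_n) : Prop :=
  exists b, upper_borel b /\ inPet (flagsp (b *m pmat w)).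
(* Ω°_w ∩ Pet ≠ ∅ : Ω°_w = B^- w B / B = { b w B : b ∈ B^- } *)
Definition dual_schubert_meets_Pet (w : 'S_n) : Prop :=
  exists b, lower_borel b /\ inPet (flagsp (b *m pmat w)).

End Flags.

Section Weyl.
Variable n : nat.

(* simple transposition s_(k+1) (paper's 1-indexed s_i, i = k+1),
   swapping the 0-indexed positions k and k+1 *)
Definition sref (k : nat) : 'S_n :=
  match n return 'S_n with
  | 0 => 1%g
  | m.+1 => if (k.+1 < m.+1)%N then tperm (inord k : 'I_m.+1) (inord k.+1) else 1%g
  end.

(* J ⊆ [n-1] is encoded as a set of 0-indexed k < n-1 (k <-> s_(k+1)) *)
Definition parabolic (J : {set 'I_n.-1}) : {set 'S_n} :=
  <<[set sref (val k) | k in J]>>%g.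

Definition perm_length (w : 'S_n) : nat :=
  #|[set p : 'I_n * 'I_n | (p.1 < p.2)%N && (w p.2 < w p.1)%N]|.

Definition is_longest_of (J : {set 'I_n.-1}) (w : 'S_n) : Prop :=
  w \in parabolic J /\ forall u, u \in parabolic J -> (perm_length u <= perm_length w)%N.

End Weyl.

From mathcomp Require Import all_boot all_order all_algebra all_fingroup.
From mathcomp Require Import reals complex.
From mathcomp Require Import zify.
Set Implicit Arguments. Unset Strict Implicit. Unset Printing Implicit Defensive.

(* All three conditions on w in S_n are equivalent to a combinatorial condition
   pet_perm w: whenever w k > 0 and k + 1 < n, the value w k - 1 is taken by w
   at a position <= k + 1, i.e. N e_(w k) lies in <e_(w 0), ..., e_(w (k+1))>.

   Combinatorics (section YoungSubgroup): W_J is the Young subgroup of the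
   permutations stabilizing [0, k] for every k not in J, so inversions of its
   elements stay inside blocks.  The longest element of W_J decreases on each
   block, giving pet_perm; conversely pet_perm forces w to stabilize [0, k] at
   each non-descent k, so w lies in W_J for J its descent set and inverts every
   within-block pair, hence has maximal length.

   Linear algebra (section PetersonFlags): the flag of g is Peterson iff each
   N g e_k lies in <g e_0, ..., g e_(k+1)>.  For b invertible triangular, N b e_a
   has extremal nonzero coordinate a - 1 and b preserves extremal coordinates,
   so a Peterson flag b w B forces pet_perm w; for b = 1 the converse holds. *)

Definition pet_perm n (w : 'S_n) : Prop :=
  forall k : 'I_n, k.+1 < n -> 0 < w k -> exists2 x : 'I_n, x <= k.+1 & (w x).+1 = w k.

Definition inversions n (u : 'S_n) : {set 'I_n * 'I_n} :=
  [set pq : 'I_n * 'I_n | (pq.1 < pq.2) && (u pq.2 < u pq.1)].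

Lemma perm_lengthE n (u : 'S_n) : perm_length u = #|inversions u|.
Proof. by []. Qed.

Lemma increasing_perm_id n (u : 'S_n) : {homo u : p q / p < q} -> u = 1%g.
Proof.
have below (f : 'S_n) : {homo f : p q / p < q} -> forall p : 'I_n, p <= f p.
  move=> f_incr p; suff: forall i (q : 'I_n), q = i :> nat -> q <= f q by apply.
  elim=> [|i IH] q eq_q; first by rewrite eq_q.
  have i_lt : i < n by rewrite -eq_q ltnW.
  have := IH (Ordinal i_lt) erefl; have := f_incr (Ordinal i_lt) q.
  by rewrite eq_q /= ltnSn => /(_ isT); lia.
move=> u_incr; have uV_incr : {homo (u^-1)%g : p q / p < q}.
  move=> p q pq; case: ltngtP => // [lt_qp | /val_inj eq_pq].
    by have := u_incr _ _ lt_qp; rewrite !permKV ltnNge ltnW.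
  by move: pq; rewrite -[p](permKV u) -[q](permKV u) eq_pq ltnn.
apply/permP => p; apply/val_inj/eqP; rewrite perm1 eqn_leq below // andbT.
by have := below _ uV_incr (u p); rewrite permK.
Qed.

Lemma perm_prefix_stable n (w : 'S_n) (k : nat) :
  (forall y : 'I_n, y <= k -> w y <= k) -> forall y : 'I_n, (w y <= k) = (y <= k).
Proof.
move=> into y; pose A := [set z : 'I_n | z <= k].
have wA : w @: A = A.
  apply/eqP; rewrite eqEcard card_imset ?leqnn ?andbT; last exact: perm_inj.
  by apply/subsetP => x /imsetP [z]; rewrite inE => /into wz ->; rewrite inE.
by have := mem_imset A y (@perm_inj _ w); rewrite wA !inE.
Qed.

Lemma card_prefix n (j : nat) : j < n -> #|[set c : 'I_n | c <= j]| = j.+1.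
Proof.
move=> jn; have widen_inj : injective (widen_ord jn) by move=> x y /(congr1 val) /= /val_inj.
rewrite -[j.+1]card_ord -cardsT -(card_imset _ widen_inj); apply: eq_card => c.
rewrite inE; apply/idP/imsetP => [cj | [x _ ->]]; last by rewrite /= -ltnS.
by exists (@Ordinal j.+1 c cj); rewrite ?inE //; apply: val_inj.
Qed.

Section YoungSubgroup.
Variable m : nat.
Local Notation n := m.+1.
Local Notation s_ k := (@sref n (nat_of_ord k)).
Local Notation lo k := (inord (nat_of_ord k) : 'I_n).
Local Notation hi k := (inord (nat_of_ord k).+1 : 'I_n).
Implicit Types (J : {set 'I_m}) (u w : 'S_n) (k : 'I_m).

Lemma loE k : lo k = k :> nat.
Proof. by rewrite inordK // ltnW // ltnS. Qed.

Lemma hiE k : hi k = k.+1 :> nat.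
Proof. by rewrite inordK // ltnS. Qed.

Lemma srefE k : s_ k = tperm (lo k) (hi k).
Proof. by rewrite /sref ltnS ltn_ord. Qed.

Lemma sref_val k (x : 'I_n) :
  s_ k x = (if (x : nat) == k then k.+1 else if (x : nat) == k.+1 then k : nat else x) :> nat.
Proof.
rewrite srefE; case: tpermP => [->|->|]; rewrite ?loE ?hiE ?eqxx //.
  by rewrite ifN // neq_ltn ltnSn orbT.
move=> x_lo x_hi; rewrite ifN ?ifN //; apply/eqP => e.
  by apply: x_hi; apply: ord_inj; rewrite hiE.
by apply: x_lo; apply: ord_inj; rewrite loE.
Qed.

(* w k and w (k+1) are distinct: an ascent is exactly a non-descent *)
Lemma adjacent_cmp u k : (u (lo k) < u (hi k)) = ~~ (u (hi k) < u (lo k)).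
Proof.
rewrite -leqNgt [RHS]leq_eqVlt; case: eqP => [e|//].
have /(congr1 (@nat_of_ord n)) := perm_inj (ord_inj e).
by rewrite loE hiE => /n_Sn.
Qed.

(* the Young subgroup: permutations stabilizing [0, k] for every k not in J,
   i.e. preserving each block of consecutive positions linked by J *)
Definition young J : {set 'S_n} :=
  [set u : 'S_n | [forall k : 'I_m, (k \notin J) ==> [forall y : 'I_n, (u y <= k) == (y <= k)]]].

Lemma youngP J u :
  reflect (forall k, k \notin J -> forall y : 'I_n, (u y <= k) = (y <= k)) (u \in young J).
Proof.
rewrite inE; apply: (iffP forallP) => [h k kJ y | h k].
  by have /implyP/(_ kJ)/forallP/(_ y)/eqP := h k.
by apply/implyP => kJ; apply/forallP => y; rewrite h.
Qed.

Lemma young_group_set J : group_set (young J).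
Proof.
apply/group_setP; split; first by apply/youngP => k _ y; rewrite perm1.
by move=> u v /youngP hu /youngP hv; apply/youngP => k kJ y; rewrite permM hv ?hu.
Qed.

Canonical young_group J := Group (young_group_set J).

Lemma sref_young J k : k \in J -> s_ k \in young J.
Proof.
move=> kJ; apply/youngP => c cJ y.
have ck : c != k :> nat by apply: contraNneq cJ => /val_inj ->.
rewrite sref_val; case: ifP => [/eqP ->|_]; last case: ifP => [/eqP ->|//].
  by move: ck; lia.
by move: ck; lia.
Qed.

Lemma parabolic_young J : @parabolic n J \subset young J.
Proof.
rewrite /parabolic (gen_subG _ (young_group J)).
by apply/subsetP => _ /imsetP [k kJ ->]; apply: sref_young.
Qed.

Lemma young_inversion J u (p q : 'I_n) : u \in young J -> p < q -> u q < u p ->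
  forall k, p <= k < q -> k \in J.
Proof.
move=> /youngP uY pq uqp k /andP [pk kq]; apply: contraTT uqp => kJ.
by have := uY k kJ p; have := uY k kJ q; move: pk kq; lia.
Qed.

Lemma perm_chain (r : nat -> nat -> Prop) u (p q : 'I_n) :
  (forall y x z, r x y -> r y z -> r x z) -> p < q ->
  (forall k, p <= k < q -> r (u (lo k)) (u (hi k))) -> r (u p) (u q).
Proof.
move=> r_trans pq step; pose f j := (u (inord j) : nat).
have f_homo : {in [pred j | p <= j <= q] &, {homo f : i j / i < j >-> r i j}}.
  apply: homo_ltn_in => // [i j|i]; rewrite !inE.
    by move=> ? ? l; rewrite inE; lia.
  move=> /andP [pi _] /andP [_ iq].
  have im : i < m by move: (ltn_ord q); lia.
  by apply: (step (Ordinal im)); rewrite /= pi.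
by have := f_homo p q; rewrite /f !inord_val; apply=> //; rewrite inE leqnn ?andbT ltnW.
Qed.

Lemma sref_increasing k (p q : 'I_n) : p < q -> (p, q) != (lo k, hi k) -> s_ k p < s_ k q.
Proof.
move=> pq ne; have : ~~ (((p : nat) == k) && ((q : nat) == k.+1)).
  apply: contra ne => /andP [/eqP ep /eqP eq]; apply/eqP.
  by congr pair; apply: ord_inj; rewrite ?loE ?hiE.
rewrite !sref_val; move: pq.
by repeat case: eqP; lia.
Qed.

(* left multiplication by s_k at an ascent creates exactly one more inversion *)
Lemma length_sref u k : u (lo k) < u (hi k) -> perm_length u < perm_length (s_ k * u).
Proof.
move=> asc; have s_incr := @sref_increasing k; rewrite !perm_lengthE srefE in s_incr *.
set t := tperm _ _ in s_incr *; pose swap (pq : 'I_n * 'I_n) := (t pq.1, t pq.2).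
have swap_inj : injective swap by move=> [a b] [c d] [/perm_inj -> /perm_inj ->].
have sub : (lo k, hi k) |: swap @: inversions u \subset inversions (t * u).
  apply/subsetP => x; rewrite in_setU1 => /orP [/eqP -> | /imsetP [[p q]]].
    by rewrite inE /= !permM tpermL tpermR loE hiE ltnSn.
  rewrite inE /= => /andP [pq uqp] ->; rewrite inE /= !permM !tpermK uqp andbT.
  apply: s_incr => //; apply: contraTneq uqp => -[-> ->].
  by rewrite -leqNgt ltnW.
have notin : (lo k, hi k) \notin swap @: inversions u.
  apply/imsetP => -[[p q]]; rewrite inE /= => /andP [pq _] [].
  move=> /(congr1 t); rewrite tpermK tpermL => ep.
  move/(congr1 t); rewrite tpermK tpermR => eq.
  by move: pq; rewrite -ep -eq loE hiE ltnNge leqnSn.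
by rewrite (leq_trans _ (subset_leq_card sub)) // cardsU1 notin card_imset.
Qed.

Lemma sref_parabolic J k : k \in J -> s_ k \in @parabolic n J.
Proof. by move=> kJ; apply: mem_gen; apply: imset_f. Qed.

Lemma young_ascending_id J u : u \in young J ->
  (forall k, k \in J -> u (lo k) < u (hi k)) -> u = 1%g.
Proof.
move=> uY uJ; apply: increasing_perm_id => p q pq.
case: ltngtP => // [uqp | /ord_inj/perm_inj epq]; last by move: pq; rewrite epq ltnn.
have ascending k : p <= k < q -> u (lo k) < u (hi k).
  by move=> kpq; apply/uJ/(young_inversion uY pq uqp kpq).
by have := perm_chain (r := fun a b => a < b) ltn_trans pq ascending; rewrite ltnNge ltnW.
Qed.

Lemma young_parabolic J : young J \subset @parabolic n J.
Proof.
apply/subsetP => u; move: {2}(perm_length u).+1 (ltnSn (perm_length u)) => N.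
elim: N u => // N IH u lt_uN uY.
case: (pickP [pred k | (k \in J) && (u (hi k) < u (lo k))]) => [k /andP [kJ desc] | asc].
  pose v := (s_ k * u)%g.
  have vY : v \in young J by rewrite groupM ?sref_young.
  have uv : u = (s_ k * v)%g by rewrite /v mulgA srefE tperm2 mul1g.
  have v_asc : v (lo k) < v (hi k) by rewrite /v srefE !permM tpermL tpermR.
  rewrite uv groupM ?sref_parabolic // IH //.
  by apply: leq_trans (length_sref v_asc) _; rewrite -uv -ltnS.
rewrite (young_ascending_id uY) ?group1 // => k kJ.
by have := asc k; rewrite /= kJ adjacent_cmp => /negbT.
Qed.

Lemma parabolic_youngE J : @parabolic n J = young J.
Proof. by apply/eqP; rewrite eqEsubset parabolic_young young_parabolic. Qed.

Lemma longest_descent J w k : @is_longest_of n J w -> k \in J -> w (hi k) < w (lo k).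
Proof.
case=> wJ w_max kJ; rewrite -[_ < _]negbK -adjacent_cmp; apply/negP => asc.
have := length_sref asc; rewrite ltnNge w_max //.
by rewrite groupM ?sref_parabolic.
Qed.

(* w_J satisfies pet_perm: a block boundary or a within-block descent chain
   rules out w^-1 (w k - 1) > k + 1 *)
Lemma longest_pet J w : @is_longest_of n J w -> pet_perm w.
Proof.
move=> wL; have /youngP w_blocks : w \in young J by rewrite -parabolic_youngE; case: wL.
move=> k kn wk_pos.
have pred_lt : (w k).-1 < n by rewrite (leq_ltn_trans (leq_pred _)).
set x := (w^-1)%g (inord (w k).-1).
have wx : (w x).+1 = w k by rewrite permKV inordK // prednK.
exists x => //; rewrite leqNgt; apply/negP => kx.
case: (pickP [pred j : 'I_m | (k <= j < x) && (j \notin J)]) => [j /andP [kjx jJ] | no_cut].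
  (* a block boundary between k and x separates the values w k and w x *)
  by have := w_blocks j jJ k; have := w_blocks j jJ x; move: kjx wx; lia.
(* otherwise w decreases from k to x, dropping by at least 2 *)
have km : k < m by rewrite -ltnS.
have all_desc (j : 'I_m) : k <= j < x -> w (hi j) < w (lo j).
  move=> kjx; apply: longest_descent wL _.
  by have := no_cut j; rewrite /= kjx /= => /negbFE.
have drop1 := all_desc (Ordinal km) (introT andP (conj (leqnn k) (ltnW kx))).
have drop2 : w x < w (hi (Ordinal km)).
  apply: (perm_chain (r := fun a b => b < a) _ (p := hi (Ordinal km))) => //.
  - by move=> a b c; lia.
  - by rewrite hiE.
  - move=> j /andP [kj jx]; apply: all_desc; rewrite jx andbT.
    by rewrite hiE in kj; rewrite ltnW.
by move: drop1 drop2 wx; rewrite /= inord_val; lia.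
Qed.

Lemma pet_step w k (y : 'I_n) : pet_perm w -> w (lo k) < w (hi k) ->
  y <= k -> 0 < w y -> exists2 z : 'I_n, z <= k & (w z).+1 = w y.
Proof.
move=> wP asc yk wy_pos; have yn : y.+1 < n by rewrite ltnS (leq_ltn_trans yk).
have [z zy wz] := wP y yn wy_pos; exists z => //; rewrite leqNgt; apply/negP => kz.
have ez : z = hi k by apply: ord_inj; rewrite hiE; lia.
have ey : y = lo k by apply: ord_inj; rewrite loE; lia.
by move: asc wz; rewrite -ez -ey; lia.
Qed.

Lemma pet_prefix w k : pet_perm w -> w (lo k) < w (hi k) ->
  forall y : 'I_n, (w y <= k) = (y <= k).
Proof.
move=> wP asc; apply: perm_prefix_stable => y yk.
pose A := [set z : 'I_n | z <= k].
have down d (c : 'I_n) : w y - c = d -> c <= w y -> c \in w @: A.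
  elim: d c => [|d IH] c wyc cwy.
    have -> : c = w y by apply: ord_inj; lia.
    by rewrite imset_f // inE.
  have c1 : c.+1 < n by rewrite (leq_ltn_trans _ (ltn_ord (w y))) //; lia.
  have /imsetP [z zA wz] : Ordinal c1 \in w @: A by apply: IH => /=; lia.
  have zk : z <= k by rewrite inE in zA.
  have wz_pos : 0 < w z by rewrite -wz.
  have [z' z'k wz'] := pet_step wP asc zk wz_pos.
  have -> : c = w z' by apply: ord_inj; move: wz'; rewrite -wz /=; case.
  by rewrite imset_f // inE.
have : [set c : 'I_n | c <= w y] \subset w @: A by apply/subsetP => c; rewrite inE; apply: down.
move/subset_leq_card; rewrite card_imset; last exact: perm_inj.
by rewrite !card_prefix // ltnS ltnW.
Qed.

(* a permutation satisfying pet_perm is w_J for J its set of descents *)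
Lemma pet_longest w : pet_perm w -> exists J, @is_longest_of n J w.
Proof.
move=> wP; pose J := [set k : 'I_m | w (hi k) < w (lo k)].
have wY : w \in young J.
  by apply/youngP => k; rewrite inE -adjacent_cmp => asc; apply: pet_prefix.
exists J; split=> [|u]; first by rewrite parabolic_youngE.
rewrite parabolic_youngE => uY; rewrite !perm_lengthE; apply: subset_leq_card.
apply/subsetP => -[p q]; rewrite !inE /= => /andP [pq uqp].
rewrite pq /=; apply: (perm_chain (r := fun a b => b < a) _ pq) => [a b c|k kpq]; first lia.
by have := young_inversion uY pq uqp kpq; rewrite inE.
Qed.

End YoungSubgroup.

Lemma pet_perm_longest n (w : 'S_n) :
  pet_perm w <-> exists J : {set 'I_n.-1}, is_longest_of J w.
Proof.
case: n w => [|m] w; last by split; [apply: pet_longest | case=> J; apply: longest_pet].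
have trivial (u : 'S_0) : u = 1%g by apply/permP => -[].
split=> [_|_ [] //]; exists set0; split=> [|u _]; first by rewrite (trivial w) group1.
by rewrite (trivial u) (trivial w).
Qed.

Definition before (up : bool) (i j : nat) : bool := if up then i < j else j < i.

Lemma before_trans up i j l : before up i j -> before up j l -> before up i l.
Proof. by case: up => /=; lia. Qed.

Lemma before_total up i j : i != j -> before up i j || before up j i.
Proof. by case: up => /=; lia. Qed.

Section PetersonFlags.
Variables (F : fieldType) (n : nat).
Import GRing.Theory.
Local Open Scope ring_scope.
Local Notation N := (jordanN F n).

Lemma flagsp_row (g : 'M[F]_n) i (k : 'I_n) :
  row k (flagsp g i) = if (k < i)%N then (col k g)^T else 0.
Proof. exact: rowK. Qed.

Lemma inPetP (g : 'M[F]_n) : inPet (flagsp g) <->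
  forall k : 'I_n, (k.+1 < n)%N -> exists2 d : 'cV[F]_n,
    (forall x : 'I_n, (k.+1 < x)%N -> d x 0 = 0) & N *m col k g = g *m d.
Proof.
split=> [gP k kn | gP i i_pos i_lt].
  have k1 : (k.+1 <= n.-1)%N by lia.
  have /submxP [D eqD] := submx_trans (row_sub k _) (gP k.+1 isT k1).
  exists (\col_x (if (x < k.+2)%N then D 0 x else 0)) => [x kx|].
    by rewrite mxE ifN // -leqNgt.
  have rowk : row k (flagsp g k.+1) = (col k g)^T by rewrite flagsp_row ltnSn.
  apply: trmx_inj; rewrite trmx_mul -rowk -row_mul eqD.
  apply/rowP => t; rewrite !mxE; apply: eq_bigr => x _; rewrite !mxE.
  by case: ltnP => xk; rewrite !mxE ?mulr0 ?mul0r // mulrC.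
apply/row_subP => k; rewrite row_mul flagsp_row.
case: ltnP => ki; last by rewrite mul0mx sub0mx.
have kn : (k.+1 < n)%N by move: (ltn_ord k); lia.
have [d d0 eqd] := gP k kn.
rewrite -trmx_mul eqd trmx_mul; apply/submxP; exists d^T.
apply/rowP => t; rewrite !mxE; apply: eq_bigr => x _; rewrite !mxE.
by case: ltnP => xi; rewrite !mxE // d0 ?mul0r //; lia.
Qed.

Definition triangular (up : bool) (b : 'M[F]_n) : Prop :=
  forall i j : 'I_n, before up j i -> b i j = 0.

Lemma triangular1 up : triangular up (1%:M : 'M[F]_n).
Proof.
move=> i j ji; rewrite mxE; case: eqP => // eij.
by move: ji; rewrite eij /before; case: up; rewrite ltnn.
Qed.

Lemma triangular_diag up (b : 'M[F]_n) : b \in unitmx -> triangular up b ->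
  forall i, b i i != 0.
Proof.
move=> bU bT i; have det_diag : \det b = \prod_j b j j.
  case: up bT => bT; last by rewrite det_trig //; apply/is_trig_mxP.
  by rewrite -det_tr det_trig; [apply: eq_bigr => j _; rewrite mxE |
    apply/is_trig_mxP => p q pq; rewrite mxE bT].
by move: bU; rewrite unitmxE det_diag unitfE => /prodf_neq0/(_ i isT).
Qed.

Lemma triangular_entry up (b : 'M[F]_n) (d : 'cV[F]_n) (v : 'I_n) : triangular up b ->
  (forall u : 'I_n, before up v u -> d u 0 = 0) -> (b *m d) v 0 = b v v * d v 0.
Proof.
move=> bT d0; rewrite mxE (bigD1 v) //= big1 ?addr0 // => u uv.
by case/orP: (before_total up uv) => [/bT -> | /d0 ->]; rewrite ?mul0r ?mulr0.
Qed.

Lemma triangular_pivot up (b : 'M[F]_n) (d : 'cV[F]_n) (c : 'I_n) :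
  b \in unitmx -> triangular up b -> (b *m d) c 0 != 0 ->
  (forall t : 'I_n, before up c t -> (b *m d) t 0 = 0) -> d c 0 != 0.
Proof.
move=> bU bT bdc bd0; have bdiag := triangular_diag bU bT.
pose key (v : 'I_n) := if up then v : nat else (n - v)%N.
have key_before (u v : 'I_n) : before up u v -> (key u < key v)%N.
  by rewrite /key /before; move: (ltn_ord u) (ltn_ord v); case: ifP; lia.
have d0 (v0 : 'I_n) : before up c v0 -> d v0 0 = 0.
  move=> cv0; apply/eqP; apply: contraT => dv0.
  case: (@arg_maxnP _ v0 [pred v : 'I_n | before up c v && (d v 0 != 0)] key) => [|v].
    by rewrite /= cv0.
  move=> /andP [cv dv] vmax; have := bd0 v cv.
  rewrite (triangular_entry bT) => [/eqP|u vu].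
    by rewrite mulf_eq0 (negbTE (bdiag v)) (negbTE dv).
  apply/eqP; apply: contraTT (key_before _ _ vu) => du.
  by rewrite -leqNgt; apply: vmax; rewrite /= du (before_trans cv vu).
by move: bdc; rewrite (triangular_entry bT d0) mulf_eq0 negb_or => /andP [].
Qed.

Lemma col_pmat (w : 'S_n) k : col k (pmat F w) = delta_mx (w k) 0.
Proof. by apply/colP => t; rewrite !mxE andbT. Qed.

Lemma col_mul_pmat (b : 'M[F]_n) (w : 'S_n) k : col k (b *m pmat F w) = col (w k) b.
Proof. by rewrite colE -mulmxA -colE col_pmat -colE. Qed.

Lemma pmat_mul_entry (w : 'S_n) (d : 'cV[F]_n) c : (pmat F w *m d) c 0 = d ((w^-1)%g c) 0.
Proof.
rewrite mxE (bigD1 ((w^-1)%g c)) //= mxE permKV eqxx mul1r big1 ?addr0 // => j jc.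
by rewrite mxE; case: eqP => [cwj|_]; [case/eqP: jc; rewrite cwj permK | rewrite mul0r].
Qed.

Lemma jordan_col_pivot up (b : 'M[F]_n) (a c : 'I_n) : triangular up b -> a = c.+1 :> nat ->
  (N *m col a b) c 0 = b a a /\ forall t : 'I_n, before up c t -> (N *m col a b) t 0 = 0.
Proof.
move=> bT ac; have Nb (t : 'I_n) : (N *m col a b) t 0 = \sum_(s : 'I_n) (s == t.+1 :> nat)%:R * b s a.
  by rewrite mxE; apply: eq_bigr => s _; rewrite !mxE.
split=> [|t ct]; rewrite Nb.
  rewrite (bigD1 a) //= -ac eqxx mul1r big1 ?addr0 // => s sa.
  by rewrite (negbTE (sa : (s : nat) != a)) mul0r.
apply: big1 => s _; case: eqP => [st|_]; last by rewrite mul0r.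
by rewrite bT ?mulr0 //; move: ct; rewrite /before ac st; case: ifP.
Qed.

Lemma triangular_pet_perm up (b : 'M[F]_n) (w : 'S_n) : b \in unitmx -> triangular up b ->
  inPet (flagsp (b *m pmat F w)) -> pet_perm w.
Proof.
move=> bU bT /inPetP wP k kn wk_pos; have [d d0 eqd] := wP k kn.
have c_lt : ((w k).-1 < n)%N by rewrite (leq_ltn_trans (leq_pred _)).
pose c := Ordinal c_lt; have ac : w k = c.+1 :> nat by rewrite /= prednK.
have [Nc N0] := jordan_col_pivot bT ac.
rewrite col_mul_pmat -mulmxA in eqd.
have := triangular_pivot bU bT (c := c) (d := pmat F w *m d).
rewrite -eqd Nc pmat_mul_entry => /(_ (triangular_diag bU bT _) N0) dc.
exists ((w^-1)%g c); last by rewrite permKV ac.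
by rewrite leqNgt; apply/negP => /d0 dz; rewrite dz eqxx in dc.
Qed.

Lemma pet_perm_flag (w : 'S_n) : pet_perm w -> inPet (flagsp (pmat F w)).
Proof.
move=> wP; apply/inPetP => k kn; rewrite col_pmat -colE.
case: (posnP (w k)) => [wk0 | wk_pos].
  by exists 0 => [x _|]; rewrite ?mxE // mulmx0; apply/colP => t; rewrite !mxE wk0.
have [x xk wx] := wP k kn wk_pos.
exists (delta_mx x 0) => [y xy|].
  by rewrite mxE; case: eqP => // yx; move: xy; rewrite yx ltnNge xk.
by rewrite -colE; apply/colP => t; rewrite !mxE -wx eqSS eq_sym.
Qed.

Lemma triangular_meets_Pet up (w : 'S_n) :
  (exists b, (b \in unitmx /\ triangular up b) /\ inPet (flagsp (b *m pmat F w))) <->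
  pet_perm w.
Proof.
split=> [[b [[bU bT] bP]] | wP]; first exact: triangular_pet_perm bU bT bP.
exists 1; rewrite mul1mx; split; last exact: pet_perm_flag.
by split; [exact: unitmx1 | exact: triangular1].
Qed.

Lemma pet_perm_flagP (w : 'S_n) : inPet (flagsp (pmat F w)) <-> pet_perm w.
Proof.
split=> [wP | ]; last exact: pet_perm_flag.
by apply: (triangular_pet_perm (w := w) (unitmx1 F n) (@triangular1 true)); rewrite mul1mx.
Qed.

End PetersonFlags.

Local Open Scope ring_scope.

Theorem lemma3p5 (R : realType) (n : nat) (w : 'S_n) :
  [/\ (schubert_meets_Pet R[i] w <-> dual_schubert_meets_Pet R[i] w),
      (dual_schubert_meets_Pet R[i] w <-> inPet (flagsp (pmat R[i] w)))
    & (inPet (flagsp (pmat R[i] w)) <->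
         exists J : {set 'I_n.-1}, is_longest_of J w)].
Proof.
have schubert : schubert_meets_Pet R[i] w <-> pet_perm w := triangular_meets_Pet R[i] true w.
have dual : dual_schubert_meets_Pet R[i] w <-> pet_perm w := triangular_meets_Pet R[i] false w.
have flag := pet_perm_flagP R[i] w.
have longest := pet_perm_longest w.
by split; tauto.
Qed.
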